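(* For every positive integer $k$ and $0<\delta\le1$, the mechanism $\mathcal{SA}^k_\delta$ admits a pure Nash equilibrium for every collection $A$, is anonymous, and is $(\delta+\frac1k)$-close to the Pareto frontier in all equilibria: for every collection $A$ and every pure Nash equilibrium outcome $x$ of $\Gamma_{\mathcal{SA}^k_\delta}(A)$ there is no $y\in\mathrm{conv}(A)$ with $y_1>x_1+\delta+\frac1k$ and $y_2>x_2+\delta+\frac1k$.
   Context: Two players bargain over a collection (multiset) of $n$ alternatives $A=(a^j)_{j\in[n]}\subset[0,1]^2$, $a^j_i$ being player $i$'s utility; players are risk neutral and the outcome of a profile is the vector of expected utilities. A $k$-uniform distribution over $[n]$ is the uniform distribution over a multiset of size $k$ of elements of $[n]$; let $k$-$UN([n])$ be the (finite) set of these. In the mechanism $\mathcal{SA}^k_\delta$ each player $i$ submits a set $L_i\subseteq k$-$UN([n])$; a $k$-uniform distribution $\mu$ is selected as follows: uniformly from all of $k$-$UN([n])$ if $L_1=L_2=\emptyset$; uniformly from $L_1\cup L_2$ if $L_1\cap L_2=\emptyset\ne L_1\cup L_2$; and with probability $1-\delta$ uniformly from $L_1\cap L_2$ and with probability $\delta$ uniformly from $L_1\cup L_2$ if $L_1\cap L_2\ne\emptyset$; then an index is drawn from $\mu$. A mechanism is anonymous if both players have the same signal set and the allocation map is symmetric in the two signals. *)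

From HB Require Import structures.
From mathcomp Require Import all_boot all_order all_algebra.
Set Implicit Arguments. Unset Strict Implicit. Unset Printing Implicit Defensive.
Import Order.TTheory GRing.Theory Num.Theory.
Local Open Scope ring_scope.

(* A collection of n alternatives: alternative j gives utility (A j).1 to
   player 1 and (A j).2 to player 2, all in [0,1]. *)
Definition collection (R : realFieldType) (n : nat) (A : 'I_n -> R * R) : Prop :=
  forall j, (0 <= (A j).1 <= 1) /\ (0 <= (A j).2 <= 1).

Definition in_conv (R : realFieldType) (n : nat) (A : 'I_n -> R * R) (y : R * R) : Prop :=
  exists lam : 'I_n -> R,
    (forall j, 0 <= lam j) /\ \sum_j lam j = 1 /\
    y = (\sum_j lam j * (A j).1, \sum_j lam j * (A j).2).

(* A two-player mechanism over [n]: signal set of each player (the same set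
   for both) and an allocation map from signal profiles to distributions on [n]. *)
Unset Implicit Arguments.
Record mechanism (R : realFieldType) (n : nat) := Mechanism {
  signal : Type;
  alloc : signal -> signal -> 'I_n -> R }.
Arguments signal {R n} _.
Arguments alloc {R n} _ _ _ _.
Set Implicit Arguments.

Definition outcome (R : realFieldType) (n : nat) (M : mechanism R n)
  (A : 'I_n -> R * R) (s1 s2 : signal M) : R * R :=
  (\sum_j alloc M s1 s2 j * (A j).1, \sum_j alloc M s1 s2 j * (A j).2).
Arguments outcome {R n} M A s1 s2.

Definition is_PNE (R : realFieldType) (n : nat) (M : mechanism R n)
  (A : 'I_n -> R * R) (s1 s2 : signal M) : Prop :=
  (forall s1', (outcome M A s1' s2).1 <= (outcome M A s1 s2).1) /\
  (forall s2', (outcome M A s1 s2').2 <= (outcome M A s1 s2).2).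
Arguments is_PNE {R n} M A s1 s2.

(* Anonymity: same signal set (built in) and symmetric allocation map. *)
Definition anonymous (R : realFieldType) (n : nat) (M : mechanism R n) : Prop :=
  forall s1 s2 : signal M, alloc M s1 s2 =1 alloc M s2 s1.
Arguments anonymous {R n} M.

(* k-uniform distributions over [n]: uniform distributions over multisets of
   size k of elements of [n]; a multiset is given by its multiplicity function
   (a k-uniform distribution determines its multiset, so this is a bijection). *)
Definition kUN (n k : nat) : finType :=
  {m : {ffun 'I_n -> 'I_k.+1} | \sum_j (m j : nat) == k}.

Definition kUN_prob (R : realFieldType) (n k : nat) (mu : kUN n k) (j : 'I_n) : R :=
  ((val mu j : nat)%:R) / k%:R.
Arguments kUN_prob R {n k} mu j.

Definition unif (R : realFieldType) (n k : nat) (S : {set kUN n k}) (mu : kUN n k) : R :=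
  if mu \in S then (#|S|%:R)^-1 else 0.
Arguments unif R {n k} S mu.

Definition SA_select (R : realFieldType) (n k : nat) (delta : R)
  (L1 L2 : {set kUN n k}) (mu : kUN n k) : R :=
  if (L1 == set0) && (L2 == set0) then unif R [set: kUN n k] mu
  else if L1 :&: L2 == set0 then unif R (L1 :|: L2) mu
  else (1 - delta) * unif R (L1 :&: L2) mu + delta * unif R (L1 :|: L2) mu.
Arguments SA_select R {n k} delta L1 L2 mu.

Definition SA (R : realFieldType) (n k : nat) (delta : R) : mechanism R n :=
  @Mechanism R n {set kUN n k}
    (fun L1 L2 j => \sum_(mu : kUN n k) SA_select R delta L1 L2 mu * kUN_prob R mu j).

(* Write V_i mu for player i's expected utility under the k-uniform distribution mu.
   Against a fixed list of the opponent, a list earns the average of V_i over the union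
   of the two lists, or a (1 - delta, delta) mixture of the averages over their
   intersection and their union.

   Existence: take a smallest nonempty set U of distributions such that everything
   outside U is below the averages of V_1 and V_2 over U. By minimality every member of
   U reaches one of the two averages, and U splits into two lists that are mutual best
   responses: the members reaching the V_1-average against the others, the two lists
   overlapping in a Pareto-maximal member above both averages when there is one.

   Closeness: deviating to a singleton shows that no member of the opponent's list beats
   the equilibrium payoff by more than delta, and adding mu to one's own list shows that
   no distribution in neither list beats it at all. A point of conv(A) lies below a point
   of a segment between two alternatives, and rounding the weight on that segment to a
   multiple of 1/k loses at most 1/k in each coordinate. *)

From HB Require Import structures.
From mathcomp Require Import all_boot all_order all_algebra.
From mathcomp Require Import ring lra.
Import Order.TTheory GRing.Theory Num.Theory.
Set Implicit Arguments. Unset Strict Implicit. Unset Printing Implicit Defensive.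
Local Open Scope ring_scope.

Lemma setU1_neq0 (T : finType) (t : T) (A : {set T}) : t |: A != set0.
Proof. by apply/set0Pn; exists t; rewrite setU11. Qed.

Lemma set1_neq0 (T : finType) (t : T) : [set t] != set0.
Proof. by rewrite -[[set t]]setU0 setU1_neq0. Qed.

Section Mean.
Variables (R : realFieldType) (T : finType).
Implicit Types (V : T -> R) (B S U W : {set T}).

Definition mean V S : R := (#|S|%:R)^-1 * \sum_(t in S) V t.

Lemma card_gt0R S : S != set0 -> 0 < (#|S|%:R : R).
Proof. by move=> S_neq0; rewrite ltr0n card_gt0. Qed.

Lemma mulr_mean V S : S != set0 -> #|S|%:R * mean V S = \sum_(t in S) V t.
Proof. by move=> S_neq0; rewrite /mean mulVKf // gt_eqF ?card_gt0R. Qed.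

Lemma sum_const_card S (b : R) : \sum_(t in S) b = #|S|%:R * b.
Proof. by rewrite sumr_const mulr_natl. Qed.

Lemma mean_le V S b : S != set0 -> (forall t, t \in S -> V t <= b) -> mean V S <= b.
Proof.
move=> S_neq0 Vb; rewrite -(ler_pM2l (card_gt0R S_neq0)) mulr_mean // -sum_const_card.
exact: ler_sum.
Qed.

Lemma mean_ge V S b : S != set0 -> (forall t, t \in S -> b <= V t) -> b <= mean V S.
Proof.
move=> S_neq0 Vb; rewrite -(ler_pM2l (card_gt0R S_neq0)) mulr_mean // -sum_const_card.
exact: ler_sum.
Qed.

Lemma mean_set1 V t : mean V [set t] = V t.
Proof. by rewrite /mean cards1 big_set1 invr1 mul1r. Qed.

Lemma mean_subr V S a : S != set0 ->
  mean V S - a = (#|S|%:R)^-1 * \sum_(t in S) (V t - a).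
Proof.
move=> S_neq0; rewrite sumrB sum_const_card -mulr_mean // -mulrBr mulKf //.
by rewrite gt_eqF ?card_gt0R.
Qed.

Lemma sum_sub_mean V S : \sum_(t in S) (V t - mean V S) = 0.
Proof.
have [->|S_neq0] := eqVneq S set0; first by rewrite big_set0.
by rewrite sumrB sum_const_card mulr_mean // subrr.
Qed.

Lemma mean_setU1 V W t : t \notin W ->
  (#|W|%:R + 1) * mean V (t |: W) = V t + #|W|%:R * mean V W.
Proof.
move=> tW; have [->|W_neq0] := eqVneq W set0.
  by rewrite cards0 add0r mul1r mul0r addr0 setU0 mean_set1.
have card_tW : #|t |: W|%:R = #|W|%:R + 1 :> R by rewrite cardsU1 tW natrD addrC.
rewrite -card_tW !mulr_mean ?big_setU1 //.
exact: setU1_neq0.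
Qed.

Lemma mean_setU1_le V W t :
  t \notin W -> mean V (t |: W) <= mean V W -> V t <= mean V W.
Proof.
move=> tW; have := mean_setU1 V tW; have : 0 <= (#|W|%:R : R) := ler0n _ _.
by move: (mean V _) (mean V W) (#|W|%:R : R) => m' m c c_ge0 mE; nra.
Qed.

Lemma mean_setU1_lt V W t :
  t \notin W -> V t < mean V (t |: W) -> mean V (t |: W) <= mean V W.
Proof.
move=> tW; have := mean_setU1 V tW; have : 0 <= (#|W|%:R : R) := ler0n _ _.
by move: (mean V _) (mean V W) (#|W|%:R : R) => m' m c c_ge0 mE; nra.
Qed.

Lemma mean_superset_le V U B W :
  (forall t, t \in U -> t \notin B -> mean V U <= V t) ->
  (forall t, t \notin U -> V t <= mean V U) ->
  B \subset W -> W != set0 -> mean V W <= mean V U.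
Proof.
move=> above below sBW W_neq0; rewrite -subr_le0 mean_subr //.
apply: mulr_ge0_le0; first by rewrite invr_ge0 ler0n.
rewrite -[X in _ <= X](sum_sub_mean V U) big_mkcond [X in _ <= X]big_mkcond /=.
apply: ler_sum => t _; case tW: (t \in W); case tU: (t \in U) => //.
- by rewrite subr_le0 below ?tU.
- by rewrite subr_ge0 above //; apply: contraFN tW => /(subsetP sBW).
Qed.

End Mean.

Section SelectionValue.
Variables (R : realFieldType) (T : finType) (delta : R).
Implicit Types (V : T -> R) (L U W : {set T}).

Definition sa_value V L1 L2 : R :=
  if (L1 == set0) && (L2 == set0) then mean V [set: T]
  else if L1 :&: L2 == set0 then mean V (L1 :|: L2)
  else (1 - delta) * mean V (L1 :&: L2) + delta * mean V (L1 :|: L2).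

Lemma sa_valueC V L1 L2 : sa_value V L1 L2 = sa_value V L2 L1.
Proof. by rewrite /sa_value andbC setIC setUC. Qed.

Definition best_response V L1 L2 := forall L, sa_value V L L2 <= sa_value V L1 L2.

Definition sa_equilibrium V1 V2 L1 L2 :=
  best_response V1 L1 L2 /\ best_response V2 L2 L1.

Section Existence.
Hypothesis delta_ge0 : 0 <= delta.
Hypothesis delta_le1 : delta <= 1.

Lemma sa_value_deviation_le V L1 L2 b :
  L1 :|: L2 != set0 ->
  (forall t, t \in L1 -> t \notin L2 -> mean V (L1 :|: L2) <= V t) ->
  (forall t, t \notin L1 :|: L2 -> V t <= mean V (L1 :|: L2)) ->
  (forall t, t \in L2 -> V t <= b) -> mean V (L1 :|: L2) <= b ->
  forall L, sa_value V L L2 <= (1 - delta) * b + delta * mean V (L1 :|: L2).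
Proof.
set a := mean V _ => U_neq0 above below L2_le ab L.
have a_le : a <= (1 - delta) * b + delta * a.
  have delta'_ge0 : 0 <= 1 - delta by rewrite subr_ge0.
  by have := ler_wpM2l delta'_ge0 ab; lra.
have sup W : L2 \subset W -> W != set0 -> mean V W <= a.
  move=> sBW W_neq0; apply: mean_superset_le below sBW W_neq0 => t.
  by rewrite inE => /orP[/above|->].
rewrite /sa_value; case: ifP => [/andP[_ /eqP L2_0]|not_both0].
  apply: le_trans a_le; apply: sup; first by rewrite L2_0 sub0set.
  by apply: contraNneq U_neq0 => T0; rewrite -subset0 -T0 subsetT.
case: ifP => [_|/negbT I_neq0].
  by apply: le_trans a_le; apply: sup; rewrite ?subsetUr ?setU_eq0 ?not_both0.
apply: lerD; apply: ler_wpM2l; rewrite ?subr_ge0 //.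
  by apply: mean_le => // t; rewrite inE => /andP[_ /L2_le].
by apply: sup; rewrite ?subsetUr ?setU_eq0 ?not_both0.
Qed.

Definition dominates_outside V1 V2 U :=
  [forall t, (t \notin U) ==> (V1 t <= mean V1 U) && (V2 t <= mean V2 U)].

Lemma minimal_dominating_mean_le V1 V2 U :
  U != set0 -> dominates_outside V1 V2 U ->
  (forall U', U' != set0 -> dominates_outside V1 V2 U' -> (#|U| <= #|U'|)%N) ->
  forall t, t \in U -> (mean V1 U <= V1 t) || (mean V2 U <= V2 t).
Proof.
move=> U_neq0 domU U_min t tU.
apply: contraT; rewrite negb_or -!ltNge => /andP[lt1 lt2].
have UE : U = t |: (U :\ t) by rewrite setD1K.
have tU' : t \notin U :\ t by rewrite !inE eqxx.
have U'_neq0 : U :\ t != set0.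
  by apply: contraTneq lt1 => U'0; rewrite UE U'0 setU0 mean_set1 ltxx.
have shrink V : V t < mean V U -> mean V U <= mean V (U :\ t).
  by rewrite {1 2}UE; apply: mean_setU1_lt.
have [m1 m2] := (shrink V1 lt1, shrink V2 lt2).
have domU' : dominates_outside V1 V2 (U :\ t).
  apply/forallP => x; apply/implyP; case: (eqVneq x t) => [-> _|xt xU'].
    by rewrite (le_trans (ltW lt1) m1) (le_trans (ltW lt2) m2).
  have xU : x \notin U by move: xU'; rewrite !inE xt.
  move/forallP/(_ x): domU; rewrite xU => /andP[le1 le2].
  by rewrite (le_trans le1 m1) (le_trans le2 m2).
by have := U_min _ U'_neq0 domU'; rewrite (cardsD1 t U) tU add1n ltnn.
Qed.

Section Construction.
Variables (V1 V2 : T -> R) (U : {set T}).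
Hypothesis U_neq0 : U != set0.
Hypothesis below_outside :
  forall t, t \notin U -> V1 t <= mean V1 U /\ V2 t <= mean V2 U.
Hypothesis above_inside :
  forall t, t \in U -> (mean V1 U <= V1 t) || (mean V2 U <= V2 t).

Lemma sa_equilibrium_at_top c :
  c \in U -> mean V1 U <= V1 c -> mean V2 U <= V2 c ->
  (forall t, t \in U -> V1 c < V1 t -> V2 t <= V2 c) ->
  exists L1 L2, sa_equilibrium V1 V2 L1 L2.
Proof.
move=> cU ac1 ac2 c_top.
pose P t := (mean V1 U <= V1 t) && (V2 t <= V2 c).
have Pc : P c by rewrite /P ac1 lexx.
pose L1 := [set t in U | P t]; pose L2 := c |: [set t in U | ~~ P t].
have UE : L1 :|: L2 = U.
  apply/setP => t; rewrite !inE; case: eqVneq => [->|_]; first by rewrite cU orbT.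
  by case: (t \in U); case: (P t).
have UE' : L2 :|: L1 = U by rewrite setUC.
have IE : L1 :&: L2 = [set c].
  apply/setP => t; rewrite !inE; case: eqVneq => [->|_]; first by rewrite cU Pc.
  by case: (P t); rewrite ?andbF.
have L2_neq0 : L2 != set0 := setU1_neq0 _ _.
have valueE V : sa_value V L1 L2 = (1 - delta) * V c + delta * mean V U.
  by rewrite /sa_value (negbTE L2_neq0) andbF IE (negbTE (set1_neq0 c)) mean_set1 UE.
exists L1, L2; split=> L.
  rewrite valueE -UE; apply: sa_value_deviation_le; rewrite ?UE //.
  - by move=> t; rewrite inE => /andP[_ /andP[]].
  - by move=> t /below_outside[].
  - move=> t; rewrite !inE => /orP[/eqP-> //|/andP[tU nPt]].
    rewrite leNgt; apply/negP => lt_ct.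
    have Pt : P t by rewrite /P (le_trans ac1 (ltW lt_ct)) c_top.
    by rewrite Pt in nPt.
rewrite [sa_value V2 L2 L1]sa_valueC valueE -UE'.
apply: sa_value_deviation_le; rewrite ?UE' //.
- move=> t; rewrite !inE => /orP[/eqP->|/andP[tU]]; first by rewrite cU Pc.
  rewrite /P negb_and -!ltNge => /orP[lt1|lt2] _; last exact: le_trans ac2 (ltW lt2).
  by have := above_inside tU; rewrite leNgt lt1.
- by move=> t /below_outside[].
- by move=> t; rewrite inE => /andP[_ /andP[]].
Qed.

Lemma sa_equilibrium_split :
  (forall t, t \in U -> mean V1 U <= V1 t -> V2 t < mean V2 U) ->
  exists L1 L2, sa_equilibrium V1 V2 L1 L2.
Proof.
move=> below2.
pose L1 := [set t in U | mean V1 U <= V1 t]; pose L2 := [set t in U | V1 t < mean V1 U].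
have UE : L1 :|: L2 = U.
  by apply/setP => t; rewrite !inE -andb_orr; case: leP; rewrite ?andbT.
have UE' : L2 :|: L1 = U by rewrite setUC.
have IE : L1 :&: L2 = set0.
  by apply/setP => t; rewrite !inE; case: (t \in U); case: leP.
have not_both0 : (L1 == set0) && (L2 == set0) = false.
  by apply: negbTE; rewrite -setU_eq0 UE.
have valueE V : sa_value V L1 L2 = (1 - delta) * mean V U + delta * mean V U.
  by rewrite /sa_value not_both0 IE eqxx UE; ring.
exists L1, L2; split=> L.
  rewrite valueE -{2}UE; apply: sa_value_deviation_le; rewrite ?UE //.
  - by move=> t; rewrite inE => /andP[].
  - by move=> t /below_outside[].
  - by move=> t; rewrite inE => /andP[_ /ltW].
rewrite [sa_value V2 L2 L1]sa_valueC valueE -{2}UE'.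
apply: sa_value_deviation_le; rewrite ?UE' //.
- move=> t; rewrite inE => /andP[tU lt1] _.
  by have := above_inside tU; rewrite leNgt lt1.
- by move=> t /below_outside[].
- by move=> t; rewrite inE => /andP[tU /(below2 t tU)/ltW].
Qed.

End Construction.

Theorem sa_equilibrium_exists V1 V2 : exists L1 L2, sa_equilibrium V1 V2 L1 L2.
Proof.
have [T0|[t0 _]] := set_0Vmem [set: T].
  have L0 L : L = set0 by apply/eqP; rewrite -subset0 -T0 subsetT.
  by exists set0, set0; split=> L; rewrite (L0 L).
have T_neq0 : [set: T] != set0 by apply/set0Pn; exists t0.
have domT : dominates_outside V1 V2 [set: T] by apply/forallP => t; rewrite inE.
case: (@arg_minnP _ [set: T] (fun U => (U != set0) && dominates_outside V1 V2 U)
  (fun U => #|U|)); first by rewrite T_neq0 domT.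
move=> U /andP[U_neq0 domU] U_min.
have above := minimal_dominating_mean_le U_neq0 domU
  (fun U' U'_neq0 domU' => U_min U' (introT andP (conj U'_neq0 domU'))).
have below t : t \notin U -> V1 t <= mean V1 U /\ V2 t <= mean V2 U.
  by move=> tU; move/forallP/(_ t): domU; rewrite tU => /andP.
pose top c := [&& c \in U, mean V1 U <= V1 c & mean V2 U <= V2 c].
case: (pickP top) => [c0 top_c0|no_top]; last first.
  apply: sa_equilibrium_split U_neq0 below above _ => t tU le1.
  by rewrite ltNge; apply: contraFN (no_top t) => le2; rewrite /top tU le1.
case: (arg_maxP (fun c => V1 c + V2 c) top_c0) => c /and3P[cU ac1 ac2] c_max.
apply: (sa_equilibrium_at_top U_neq0 below above cU ac1 ac2) => t tU lt1.
rewrite leNgt; apply/negP => lt2.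
have := c_max t; rewrite /top tU (le_trans ac1 (ltW lt1)) (le_trans ac2 (ltW lt2)).
by move=> /(_ isT) /=; rewrite leNgt ltrD.
Qed.

End Existence.

Section Closeness.
Hypothesis delta_gt0 : 0 < delta.

Lemma best_response_member_le V L1 L2 mu :
  (forall t, 0 <= V t <= 1) -> best_response V L1 L2 -> mu \in L2 ->
  V mu - delta <= sa_value V L1 L2.
Proof.
move=> V01 br muL2; apply: le_trans (br [set mu]).
have [I_eq U_eq] : [set mu] :&: L2 = [set mu] /\ [set mu] :|: L2 = L2.
  by split; [apply/setIidPl | apply/setUidPr]; rewrite sub1set.
rewrite /sa_value (negbTE (set1_neq0 mu)) I_eq U_eq (negbTE (set1_neq0 mu)) mean_set1 /=.
have m_ge0 : 0 <= mean V L2.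
  by apply: mean_ge => [|t _]; [apply/set0Pn; exists mu | case/andP: (V01 t)].
case/andP: (V01 mu) => _ Vmu_le1.
have : 0 <= delta * (1 - V mu + mean V L2) by apply: mulr_ge0; [exact: ltW | lra].
lra.
Qed.

Lemma best_response_outside_le V L1 L2 mu :
  best_response V L1 L2 -> mu \notin L1 -> mu \notin L2 -> V mu <= sa_value V L1 L2.
Proof.
move=> br mu1 mu2.
have muU : mu \notin L1 :|: L2 by rewrite inE negb_or mu1.
have IE : (mu |: L1) :&: L2 = L1 :&: L2.
  by apply/setP => t; rewrite !inE; case: eqVneq => [->|] //=; rewrite (negbTE mu2) andbF.
(* Deviating to [mu |: L1] bounds [V mu] by the mean over the union; deviating to
   [L1 :\: L2] bounds that mean by the payoff. *)
have := br (mu |: L1); rewrite /sa_value (negbTE (setU1_neq0 mu L1)) IE -setUA /=.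
have [/andP[/eqP L1_0 /eqP L2_0]|not_both0] := boolP ((L1 == set0) && (L2 == set0)).
  by rewrite L1_0 L2_0 setI0 eqxx !setU0 mean_set1.
have [_|I_neq0 mix_le] := eqVneq (L1 :&: L2) set0; first exact: mean_setU1_le.
have DU : (L1 :\: L2) :|: L2 = L1 :|: L2.
  by apply/setP => t; rewrite !inE; case: (t \in L2); rewrite ?orbT ?orbF ?andbT.
have DI : (L1 :\: L2) :&: L2 = set0.
  by apply/setP => t; rewrite !inE; case: (t \in L2); rewrite ?andbF.
have D_not_both0 : ((L1 :\: L2) == set0) && (L2 == set0) = false.
  by apply: negbTE; rewrite -setU_eq0 DU setU_eq0.
have := br (L1 :\: L2).
rewrite /sa_value D_not_both0 DI DU eqxx (negbTE not_both0) (negbTE I_neq0) => U_le.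
apply: le_trans U_le; apply: mean_setU1_le muU _.
by rewrite -(ler_pM2l delta_gt0); lra.
Qed.

Lemma sa_equilibrium_no_improvement V1 V2 L1 L2 mu :
  (forall t, 0 <= V1 t <= 1) -> (forall t, 0 <= V2 t <= 1) ->
  sa_equilibrium V1 V2 L1 L2 ->
  ~ (sa_value V1 L1 L2 + delta < V1 mu /\ sa_value V2 L2 L1 + delta < V2 mu).
Proof.
move=> V1_01 V2_01 [br1 br2] [gt1 gt2].
have mu2 : mu \notin L2 by apply/negP => /(best_response_member_le V1_01 br1); lra.
have mu1 : mu \notin L1 by apply/negP => /(best_response_member_le V2_01 br2); lra.
by have := best_response_outside_le br1 mu1 mu2; have := delta_gt0; lra.
Qed.

End Closeness.

End SelectionValue.

Lemma weights_eq0_of_neg_sum (R : realFieldType) (I : finType)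
    (lam w : I -> R) (P : pred I) :
  (forall j, 0 <= lam j) -> (forall j, P j -> w j < 0) ->
  \sum_(j | P j) lam j * w j = 0 -> \sum_(j | P j) lam j = 0.
Proof.
move=> lam_ge0 w_lt0 sum0.
have term_ge0 j : P j -> 0 <= lam j * - w j.
  by move=> Pj; rewrite mulr_ge0 // oppr_ge0 ltW ?w_lt0.
have /psumr_eq0P term0 : \sum_(j | P j) lam j * - w j = 0.
  by rewrite (eq_bigr _ (fun j _ => mulrN _ _)) sumrN sum0 oppr0.
rewrite big1 // => j Pj; apply/eqP; move/eqP: (term0 term_ge0 j Pj).
by rewrite mulf_eq0 oppr_eq0 (negbTE (ltr0_neq0 (w_lt0 j Pj))) orbF.
Qed.

Lemma cross_sum_split (R : comPzRingType) (I : finType) (lam u v : I -> R) (P : pred I) :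
  \sum_(p | P p.1 && ~~ P p.2) lam p.1 * lam p.2 * (u p.1 * v p.2 - u p.2 * v p.1) =
  (\sum_(j | P j) lam j * u j) * (\sum_(j | ~~ P j) lam j * v j)
  - (\sum_(j | P j) lam j * v j) * (\sum_(j | ~~ P j) lam j * u j).
Proof.
rewrite -(pair_big_dep P (fun _ => predC P)
  (fun s t => lam s * lam t * (u s * v t - u t * v s))) /=.
rewrite !mulr_suml -sumrB; apply: eq_bigr => s _.
by rewrite !mulr_sumr -sumrB; apply: eq_bigr => t _; ring.
Qed.

Section ConvexHull.
Variables (R : realFieldType) (I : finType).
Implicit Types (lam u v : I -> R).

Lemma zero_mean_witnesses lam u v :
  (forall j, 0 <= lam j) -> \sum_j lam j = 1 ->
  \sum_j lam j * u j = 0 -> \sum_j lam j * v j = 0 ->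
  (exists s, 0 <= u s /\ 0 <= v s) \/
  (exists s t, [/\ 0 <= u s, u t < 0 & 0 <= u s * v t - u t * v s]).
Proof.
move=> lam_ge0 lam_sum u0 v0.
have [/existsP[s /andP[us vs]]|no_s] := boolP [exists s, (0 <= u s) && (0 <= v s)].
  by left; exists s.
have [/existsP[s /existsP[t /and3P[us ut uv]]]|no_st] :=
  boolP [exists s, exists t, [&& 0 <= u s, u t < 0 & 0 <= u s * v t - u t * v s]].
  by right; exists s, t.
exfalso; pose P j := 0 <= u j.
have u_lt0 t : ~~ P t -> u t < 0 by rewrite /P -ltNge.
have v_lt0 s : P s -> v s < 0.
  move=> Ps; rewrite ltNge; apply: contra no_s => vs.
  by apply/existsP; exists s; apply/andP; split.
have cross_lt0 (p : I * I) : P p.1 && ~~ P p.2 -> u p.1 * v p.2 - u p.2 * v p.1 < 0.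
  case: p => s t /andP[Ps Pt] /=; rewrite ltNge; apply: contra no_st => uv.
  apply/existsP; exists s; apply/existsP; exists t.
  by apply/and3P; split => //; exact: u_lt0.
set aP := \sum_(j | P j) lam j * u j; set aN := \sum_(j | ~~ P j) lam j * u j.
set bP := \sum_(j | P j) lam j * v j; set bN := \sum_(j | ~~ P j) lam j * v j.
have aE : aP + aN = 0 by rewrite -u0 (bigID P).
have bE : bP + bN = 0 by rewrite -v0 (bigID P).
have cross0 : \sum_(p | P p.1 && ~~ P p.2)
    lam p.1 * lam p.2 * (u p.1 * v p.2 - u p.2 * v p.1) = 0.
  rewrite cross_sum_split -/aP -/aN -/bP -/bN.
  have [-> ->] : aN = - aP /\ bN = - bP by split; lra.
  by rewrite !mulrN opprK addrC [bP * aP]mulrC subrr.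
have : (\sum_(j | P j) lam j) * (\sum_(j | ~~ P j) lam j) = 0.
  rewrite mulr_suml; under eq_bigr do rewrite mulr_sumr.
  rewrite pair_big_dep /=.
  apply: (weights_eq0_of_neg_sum _ cross_lt0 cross0) => p.
  exact: mulr_ge0.
have lam_split : \sum_(j | P j) lam j + \sum_(j | ~~ P j) lam j = 1.
  by rewrite -lam_sum [RHS](bigID P).
move/eqP; rewrite mulf_eq0 => /orP[/eqP lamP0|/eqP lamN0].
  have aP0 : aP = 0.
    by rewrite /aP big1 // => j Pj; rewrite (psumr_eq0P (fun j _ => lam_ge0 j) lamP0) ?mul0r.
  have := weights_eq0_of_neg_sum lam_ge0 u_lt0 (_ : aN = 0); lra.
have bN0 : bN = 0.
  by rewrite /bN big1 // => j Pj; rewrite (psumr_eq0P (fun j _ => lam_ge0 j) lamN0) ?mul0r.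
have := weights_eq0_of_neg_sum lam_ge0 v_lt0 (_ : bP = 0); lra.
Qed.

Lemma convex_le_segment lam f g :
  (forall j, 0 <= lam j) -> \sum_j lam j = 1 ->
  exists s t tau, [/\ 0 <= tau <= 1,
    \sum_j lam j * f j <= tau * f s + (1 - tau) * f t &
    \sum_j lam j * g j <= tau * g s + (1 - tau) * g t].
Proof.
move=> lam_ge0 lam_sum.
have centered h : \sum_j lam j * (h j - \sum_i lam i * h i) = 0.
  by rewrite (eq_bigr _ (fun j _ => mulrBr _ _ _)) sumrB -mulr_suml lam_sum mul1r subrr.
case: (zero_mean_witnesses lam_ge0 lam_sum (centered g) (centered f)).
  case=> s [gs fs]; exists s, s, 1.
  by rewrite subrr !mul0r !addr0 !mul1r ler01 lexx; split; lra.
case=> s [t []]; set us := g s - _; set ut := g t - _; set vs := f s - _; set vt := f t - _.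
move=> us_ge0 ut_lt0 cross.
have D_gt0 : 0 < us - ut by lra.
(* [tau] is where the segment from [t] to [s] crosses the level of the mean of [g]. *)
pose tau := - ut / (us - ut).
have tau_ge0 : 0 <= tau by rewrite divr_ge0 // ltW // oppr_gt0.
have tau_le1 : tau <= 1 by rewrite ler_pdivrMr // mul1r; lra.
have u_mix : tau * us + (1 - tau) * ut = 0 by rewrite /tau; field; rewrite gt_eqF.
have v_mix : (us - ut) * (tau * vs + (1 - tau) * vt) = us * vt - ut * vs.
  by rewrite /tau; field; rewrite gt_eqF.
have v_mix_ge0 : 0 <= tau * vs + (1 - tau) * vt by rewrite -(pmulr_rge0 _ D_gt0) v_mix.
exists s, t, tau; rewrite tau_ge0 tau_le1; split => //.
  by move: v_mix_ge0; rewrite /vs /vt; lra.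
by move: u_mix; rewrite /us /ut; lra.
Qed.

End ConvexHull.

Lemma nat_floor_exists (R : realFieldType) (k : nat) (r : R) :
  0 <= r <= k%:R -> exists2 p, (p <= k)%N & p%:R <= r <= p%:R + 1.
Proof.
elim: k => [|k IHk] /andP[r_ge0 r_le]; first by exists 0%N => //; lra.
have [r_lek|r_gtk] := lerP r k%:R.
  by have [p le_pk] := IHk (introT andP (conj r_ge0 r_lek)); exists p => //; apply: leqW.
by exists k => //; rewrite (ltW r_gtk) natr1.
Qed.

Section KUniform.
Variables (R : realFieldType) (n k : nat).

Definition kUN_expect (f : 'I_n -> R) (mu : kUN n k) : R := \sum_j kUN_prob R mu j * f j.

Lemma kUN_expect_ge0_le1 f (mu : kUN n k) : (0 < k)%N ->
  (forall j, 0 <= f j <= 1) -> 0 <= kUN_expect f mu <= 1.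
Proof.
move=> k_gt0 f01; have prob_ge0 j : 0 <= kUN_prob R mu j by rewrite divr_ge0 ?ler0n.
have prob_sum : \sum_j kUN_prob R mu j = 1.
  by rewrite -mulr_suml -natr_sum (eqP (valP mu)) divff // pnatr_eq0 -lt0n.
apply/andP; split.
  by apply: sumr_ge0 => j _; apply: mulr_ge0 => //; case/andP: (f01 j).
rewrite -prob_sum; apply: ler_sum => j _.
by rewrite ler_piMr //; case/andP: (f01 j).
Qed.

Lemma SA_alloc_sum (delta : R) (L1 L2 : {set kUN n k}) f :
  \sum_j alloc (SA n k delta) L1 L2 j * f j = sa_value delta (kUN_expect f) L1 L2.
Proof.
have sum_unif S (W : kUN n k -> R) : \sum_mu unif R S mu * W mu = mean W S.
  rewrite /mean mulr_sumr [RHS]big_mkcond; apply: eq_bigr => mu _.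
  by rewrite /unif; case: (mu \in S); rewrite ?mul0r.
rewrite (eq_bigr (fun j => \sum_mu SA_select R delta L1 L2 mu * (kUN_prob R mu j * f j)));
  last by move=> j _; rewrite mulr_suml; apply: eq_bigr => mu _; rewrite mulrA.
rewrite exchange_big /= (eq_bigr (fun mu => SA_select R delta L1 L2 mu * kUN_expect f mu));
  last by move=> mu _; rewrite mulr_sumr.
rewrite /sa_value /SA_select; case: ifP => _; first exact: sum_unif.
case: ifP => _; first exact: sum_unif.
rewrite -!sum_unif !mulr_sumr -big_split /=; apply: eq_bigr => mu _; ring.
Qed.

Lemma kUN_two_point (s t : 'I_n) (p : nat) : (p <= k)%N ->
  exists mu : kUN n k, forall f,
    kUN_expect f mu = p%:R / k%:R * f s + (k - p)%N%:R / k%:R * f t.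
Proof.
move=> le_pk.
pose m : {ffun 'I_n -> 'I_k.+1} := [ffun j => inord ((j == s) * p + (j == t) * (k - p))].
have mE j : (m j : nat) = ((j == s) * p + (j == t) * (k - p))%N.
  rewrite ffunE inordK // ltnS.
  by case: (j == s); case: (j == t); rewrite ?mul1n ?mul0n ?addn0 ?add0n ?subnKC ?leq_subr.
have pick_nat (g : 'I_n -> nat) x : (\sum_j (j == x) * g j)%N = g x.
  by rewrite (bigD1 x) //= eqxx mul1n big1 ?addn0 // => j /negbTE ->.
have pick_R (g : 'I_n -> R) x : \sum_j (j == x)%:R * g j = g x.
  by rewrite (bigD1 x) //= eqxx mul1r big1 ?addr0 // => j /negbTE ->; rewrite mul0r.
have m_sum : \sum_j (m j : nat) == k.
  rewrite (eq_bigr _ (fun j _ => mE j)) big_split /=.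
  by rewrite (pick_nat (fun=> p)) (pick_nat (fun=> k - p)%N); apply/eqP; exact: subnKC.
exists (exist _ m m_sum) => f; rewrite /kUN_expect /kUN_prob /=.
rewrite -(pick_R (fun j => p%:R / k%:R * f j) s).
rewrite -(pick_R (fun j => (k - p)%N%:R / k%:R * f j) t) -big_split /=.
by apply: eq_bigr => j _; rewrite mE natrD !natrM; ring.
Qed.

Lemma kUN_round (s t : 'I_n) (tau : R) : (0 < k)%N -> 0 <= tau <= 1 ->
  exists mu : kUN n k, forall f, (forall j, 0 <= f j <= 1) ->
    tau * f s + (1 - tau) * f t - k%:R^-1 <= kUN_expect f mu.
Proof.
move=> k_gt0 /andP[tau_ge0 tau_le1].
have k_pos : 0 < (k%:R : R) by rewrite ltr0n.
have [p le_pk /andP[p_le p_ge]] : exists2 p, (p <= k)%N & p%:R <= k%:R * tau <= p%:R + 1.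
  by apply: nat_floor_exists; rewrite mulr_ge0 ?ler0n //= ler_piMr ?ler0n.
have [mu muE] := kUN_two_point s t le_pk.
exists mu => f f01; rewrite muE natrB //.
set rho := p%:R / k%:R.
have -> : (k%:R - p%:R) / k%:R = 1 - rho by rewrite /rho; field; rewrite gt_eqF.
have rho_le : rho <= tau by rewrite /rho ler_pdivrMr // mulrC.
have tau_le : tau <= rho + k%:R^-1.
  have : tau <= (p%:R + 1) / k%:R by rewrite ler_pdivlMr // mulrC.
  by rewrite mulrDl mul1r.
have [/andP[fs_ge0 fs_le1] /andP[ft_ge0 ft_le1]] := (f01 s, f01 t).
have : 0 <= (tau - rho) * (1 - (f s - f t)) by apply: mulr_ge0; lra.
lra.
Qed.

End KUniform.

Theorem proposition2 (R : realFieldType) (k : nat) (delta : R) :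
  (0 < k)%N -> 0 < delta <= 1 ->
  (forall (n : nat) (A : 'I_n -> R * R), collection A ->
     exists s1 s2 : signal (SA n k delta), is_PNE (SA n k delta) A s1 s2) /\
  (forall n : nat, anonymous (SA n k delta)) /\
  (forall (n : nat) (A : 'I_n -> R * R), collection A ->
     forall s1 s2 : signal (SA n k delta), is_PNE (SA n k delta) A s1 s2 ->
     ~ (exists y : R * R, in_conv A y /\
          (outcome (SA n k delta) A s1 s2).1 + delta + k%:R^-1 < y.1 /\
          (outcome (SA n k delta) A s1 s2).2 + delta + k%:R^-1 < y.2)).
Proof.
move=> k_gt0 /andP[delta_gt0 delta_le1].
have outcomeE n (A : 'I_n -> R * R) L1 L2 : outcome (SA n k delta) A L1 L2 =
    (sa_value delta (kUN_expect (fun j => (A j).1)) L1 L2,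
     sa_value delta (kUN_expect (fun j => (A j).2)) L2 L1).
  by rewrite /outcome !SA_alloc_sum [sa_value _ _ L2 L1]sa_valueC.
split; last split.
- move=> n A _.
  have [L1 [L2 [br1 br2]]] := sa_equilibrium_exists (ltW delta_gt0) delta_le1
    (kUN_expect (k := k) (fun j => (A j).1)) (kUN_expect (k := k) (fun j => (A j).2)).
  by exists L1, L2; split=> L; rewrite !outcomeE; [apply: br1 | apply: br2].
- by move=> n L1 L2 j; apply: eq_bigr => mu _; rewrite /SA_select andbC setIC setUC.
move=> n A A01 L1 L2 [ne1 ne2] [_ [[lam [lam_ge0 [lam_sum ->]]]]]; rewrite outcomeE /=.
have [s [t [tau [tau01 le1 le2]]]] :=
  convex_le_segment (fun j => (A j).1) (fun j => (A j).2) lam_ge0 lam_sum.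
have [mu mu_near] := kUN_round s t k_gt0 tau01.
have [A1_01 A2_01] : (forall j, 0 <= (A j).1 <= 1) /\ (forall j, 0 <= (A j).2 <= 1).
  by split=> j; case: (A01 j).
move=> [gt1 gt2].
apply: (sa_equilibrium_no_improvement delta_gt0 (L1 := L1) (L2 := L2) (mu := mu)
  (fun mu => kUN_expect_ge0_le1 mu k_gt0 A1_01)
  (fun mu => kUN_expect_ge0_le1 mu k_gt0 A2_01)).
  by split=> L; [have := ne1 L | have := ne2 L]; rewrite !outcomeE.
have := mu_near _ A1_01; have := mu_near _ A2_01; split; lra.
Qed.
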